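(* Let $n\ge 3$ and let $W_n^0$ be the wheel graph: vertex set $\{0,1,\dots,n\}$, edges $\{i,i+1\}$ for $1\le i<n$, the edge $\{n,1\}$, and the edges $\{0,i\}$ for $i\in[n]$ (all simple), rooted at the sink $0$. A configuration $c=(c_1,\dots,c_n)$ on $W_n^0$ is strongly recurrent if and only if $c\in\{1,2\}^n$ and $|\{i\in[n]: c_i=1\}|\le 1$. In particular $|\mathrm{SR}(W_n^0)|=|\mathrm{PPF}(W_n^0)|=n+1$.
   Context: For a rooted graph $G=(\Gamma,s)$ (finite, undirected, loopless multigraph with sink $s$), $V$ is the vertex set, $\tilde V=V\setminus\{s\}$, $\mathrm{mult}(vw)$ the number of edges between $v,w$, $\deg^A(v)=\sum_{w\in A}\mathrm{mult}(vw)$, $\deg(v)=\deg^V(v)$, $\mathbf 1_w$ the indicator of $w$. A configuration is $c:\tilde V\to\mathbb{Z}$ (written $c_i=c(i)$); stable if $c(v)<\deg(v)$ for all $v$. A stable $c$ is recurrent if there is no nonempty $F\subseteq\tilde V$ with $c(v)<\deg^F(v)$ for all $v\in F$. $V_M(c)=\{v\in\tilde V: c(v)\ge\deg(v)-\mathrm{mult}(vs)\}$; $c^{v-}=c-\sum_{w\in\tilde V\setminus\{v\}}\mathrm{mult}(ws)\mathbf 1_w$. A recurrent $c$ is strongly recurrent if $c^{v-}$ is recurrent for all $v\in V_M(c)$; $\mathrm{SR}(G)$ is their set. A $G$-parking function is $p:\tilde V\to\{1,2,\dots\}$ such that every nonempty $S\subseteq\tilde V$ contains $v$ with $p(v)\le\deg^{V\setminus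 S}(v)$. With $G^A$ the induced subgraph on $A\cup\{s\}$ rooted at $s$, $p$ is decomposable w.r.t. an ordered partition $(A,B)$ of $\tilde V$ into nonempty blocks if $p|_A$ is a $G^A$-parking function and $v\mapsto p(v)-\deg^A(v)$ on $B$ is a $G^B$-parking function; $p$ is prime if it is decomposable w.r.t. no such partition; $\mathrm{PPF}(G)$ is the set of prime $G$-parking functions. *)

From mathcomp Require Import all_boot all_order all_algebra.
Set Implicit Arguments. Unset Strict Implicit. Unset Printing Implicit Defensive.
Import Order.TTheory GRing.Theory Num.Theory.
Local Open Scope ring_scope.

(* A rooted multigraph is encoded on the vertex type [option T]:
   the sink s is [None], the non-sink vertices (tilde V) are [Some v], v : T.
   [mult x y] is the number of edges between x and y. *)
Section RootedGraph.
Variable T : finType.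
Variable mult : option T -> option T -> nat.

Definition degA (A : {set T}) (v : T) : int :=
  (\sum_(w in A) mult (Some v) (Some w))%:Z.

Definition deg (v : T) : int := (\sum_(w : option T) mult (Some v) w)%:Z.

Definition mults (v : T) : int := (mult (Some v) None)%:Z.

Definition stable (c : T -> int) : Prop := forall v, c v < deg v.

Definition recurrent (c : T -> int) : Prop :=
  stable c /\
  ~ (exists F : {set T}, F != set0 /\ forall v, v \in F -> c v < degA F v).

Definition VM (c : T -> int) : {set T} :=
  [set v | deg v - mults v <= c v].

Definition cminus (c : T -> int) (v : T) : T -> int :=
  fun u => if u == v then c u else c u - mults u.

Definition strongly_recurrent (c : T -> int) : Prop :=
  recurrent c /\ forall v, v \in VM c -> recurrent (cminus c v).

(* p restricted to A is a G^A-parking function, where G^A is the subgraph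
   induced on A ∪ {s}, rooted at s: p(v) >= 1 on A, and every nonempty
   S ⊆ A contains v with p(v) <= deg^{(A ∪ {s}) \ S}(v)
   = mult(vs) + deg^{A \ S}(v). *)
Definition parking_on (A : {set T}) (p : T -> int) : Prop :=
  (forall v, v \in A -> 1 <= p v) /\
  forall S : {set T}, S \subset A -> S != set0 ->
    exists2 v, v \in S & p v <= mults v + degA (A :\: S) v.

Definition parking (p : T -> nat) : Prop :=
  parking_on [set: T] (fun v => (p v)%:Z).

Definition decomposable (A : {set T}) (p : T -> nat) : Prop :=
  parking_on A (fun v => (p v)%:Z) /\
  parking_on (~: A) (fun v => (p v)%:Z - degA A v).

Definition prime_parking (p : T -> nat) : Prop :=
  parking p /\
  forall A : {set T}, A != set0 -> ~: A != set0 -> ~ decomposable A p.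

End RootedGraph.

(* Wheel graph W_n^0: sink 0 = None, vertex i+1 = Some i (i : 'I_n).
   Rim edges {i, i+1} (cyclically), spokes {0, i}; all simple. *)

Definition wheel (n : nat) (x y : option 'I_n) : nat :=
  match x, y with
  | None, None => 0%N
  | None, Some _ | Some _, None => 1%N
  | Some i, Some j =>
      ((i != j) && ((j == (i.+1 %% n)%N :> nat) || (i == (j.+1 %% n)%N :> nat)))%N
  end.
Arguments wheel n x y : clear implicits.

(* Every non-sink vertex of the wheel has degree 3: one edge to the sink and two rim
   neighbours, so deg^F(v) is the number of rim neighbours of v in F.  A proper nonempty
   subset F of the rim cycle has a vertex whose successor leaves F and one whose predecessor
   leaves F; these coincide only for an isolated vertex.  With values in {1,2} and at most one
   1 (resp. at most one 2), this boundary argument rules out every set F witnessing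
   non-recurrence of c and of the c^{v-}, and every set violating the parking condition or
   a decomposition.  Conversely, two 1s of a strongly recurrent c bound a rim arc avoiding some
   v with c(v) = 2, and this arc witnesses that c^{v-} is not recurrent.  A prime parking
   function p is at most 3 = deg, never 3 (that vertex could be split off), and has at most
   one 2: otherwise the arc from a 2 preceded by a 1 to the last 2 after it splits off. *)

From mathcomp Require Import all_boot all_order all_algebra.
From mathcomp Require Import zify.
Set Implicit Arguments.
Unset Strict Implicit.
Unset Printing Implicit Defensive.
Import Order.TTheory GRing.Theory Num.Theory.
Local Open Scope ring_scope.

Lemma sum_option (T : finType) (F : option T -> nat) :
  (\sum_(w : option T) F w = F None + \sum_(i : T) F (Some i))%N.
Proof.
case: (pickP T) => [x _ | T0].
  rewrite (bigD1 None) //=; congr (_ + _)%N.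
  rewrite (reindex (@Some T)) /=; first exact: eq_bigl.
  by exists (odflt x) => // -[].
by rewrite (bigD1 None) //= big1 ?big_pred0 // => -[i|] //; have := T0 i.
Qed.

Lemma sum_eq_indicator (T : finType) (A : {pred T}) (x : T) :
  (\sum_(w in A) (w == x) = (x \in A))%N.
Proof.
have [xA | xNA] := boolP (x \in A).
  by rewrite (bigD1 x) //= eqxx big1 // => w /andP[_ /negbTE ->].
by rewrite big1 // => w wA; case: eqP => // wx; rewrite -wx wA in xNA.
Qed.

Lemma set1_neq0 (T : finType) (x : T) : [set x] != set0.
Proof. by apply/set0Pn; exists x; rewrite inE. Qed.

Lemma setU1_neq0 (T : finType) (x : T) (A : {set T}) : x |: A != set0.
Proof. by apply/set0Pn; exists x; rewrite !inE eqxx. Qed.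

Section Cycle.
Variable n : nat.
Implicit Types (a b x y u : 'I_n) (S : {set 'I_n}).

Lemma val_ordS x : val (ordS x) = if (x.+1 < n)%N then x.+1 else 0%N.
Proof.
rewrite /=; case: ltnP => [lt_n | le_n]; first by rewrite modn_small.
have -> : x.+1 = n by have := ltn_ord x; lia.
by rewrite modnn.
Qed.

Lemma val_ord_pred x : val (ord_pred x) = if val x == 0%N then n.-1 else (val x).-1.
Proof.
have := ltn_ord x; rewrite /=; case: eqP => [-> | x_neq0] x_lt.
  by rewrite modn_small //; lia.
have -> : ((x + n).-1 = x.-1 + n)%N by lia.
by rewrite modnDr modn_small //; lia.
Qed.

Definition cdist a x : nat := if (a <= x)%N then (x - a)%N else (x + n - a)%N.

Lemma cdist_lt a x : (cdist a x < n)%N.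
Proof. by rewrite /cdist; case: a x => a ? [x ?] /=; case: ifP; lia. Qed.

Lemma cdist_inj a : injective (cdist a).
Proof.
rewrite /cdist => x y; case: a x y => a ? [x ?] [y ?] /= eq_d; apply: val_inj => /=.
by move: eq_d; do 2 case: ifP; lia.
Qed.

Lemma cdist_eq0 a x : (cdist a x == 0%N) = (x == a).
Proof.
by rewrite -val_eqE /cdist; case: a x => a ? [x ?] /=; case: ifP => ?; apply/eqP/eqP; lia.
Qed.

Lemma cdist_self a : cdist a a = 0%N.
Proof. by apply/eqP; rewrite cdist_eq0. Qed.

Lemma cdist_ordS a x : ((cdist a x).+1 < n)%N -> cdist a (ordS x) = (cdist a x).+1.
Proof. by rewrite /cdist val_ordS; case: a x => a ? [x ?] /=; do 3 case: ifP; lia. Qed.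

Lemma cdist_ord_pred a x : x != a -> cdist a (ord_pred x) = (cdist a x).-1.
Proof.
rewrite -val_eqE /cdist val_ord_pred; case: a x => a ? [x ?] /=.
by do 3 case: ifP; lia.
Qed.

Lemma cdist_ord_pred_self a : cdist a (ord_pred a) = n.-1.
Proof. by rewrite /cdist val_ord_pred; case: a => a ? /=; do 2 case: ifP; lia. Qed.

Lemma cdist_lt_ord_pred a b : b != ord_pred a -> (cdist a b < n.-1)%N.
Proof.
rewrite -(inj_eq (@cdist_inj a)) cdist_ord_pred_self => ne.
by have := cdist_lt a b; lia.
Qed.

Lemma exists_ordS_notin S : S != set0 -> S != setT -> exists2 u, u \in S & ordS u \notin S.
Proof.
(* The first vertex outside [S] after some [x] in [S] is entered from [S]. *)
case/set0Pn => x xS; rewrite -properT => /properP[_ [y _ yS]].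
case: (@arg_minnP _ y [pred z | z \notin S] (cdist x) yS) => z zS z_min.
have zx : z != x by apply: contraNneq zS => ->.
exists (ord_pred z); last by rewrite ord_predK.
apply: contraT => /z_min; rewrite cdist_ord_pred //.
by move: zx; rewrite -cdist_eq0; lia.
Qed.

Lemma exists_ord_pred_notin S :
  S != set0 -> S != setT -> exists2 u, u \in S & ord_pred u \notin S.
Proof.
move=> S0 ST; have CS0 : ~: S != set0 by rewrite -setCT (inj_eq (@setC_inj _)).
have CST : ~: S != setT by rewrite -setC0 (inj_eq (@setC_inj _)).
have [u] := @exists_ordS_notin (~: S) CS0 CST.
by rewrite !inE negbK => uS Su; exists (ordS u); rewrite ?ordSK.
Qed.

Definition arc a b : {set 'I_n} := [set x | (cdist a x <= cdist a b)%N].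

Lemma arc_first a b : a \in arc a b.
Proof. by rewrite inE cdist_self. Qed.

Lemma arc_last a b : b \in arc a b.
Proof. by rewrite inE. Qed.

Lemma arc_ord_pred_full a x : x \in arc a (ord_pred a).
Proof. by rewrite inE cdist_ord_pred_self; have := cdist_lt a x; lia. Qed.

Lemma arc_ordS a b x :
  b != ord_pred a -> x \in arc a b -> (ordS x \in arc a b) = (x != b).
Proof.
rewrite !inE => /cdist_lt_ord_pred b_lt x_arc.
rewrite cdist_ordS; last by have := cdist_lt a x; lia.
by rewrite -(inj_eq (@cdist_inj a)); lia.
Qed.

Lemma arc_ord_pred a b x :
  b != ord_pred a -> x \in arc a b -> (ord_pred x \in arc a b) = (x != a).
Proof.
rewrite !inE => /cdist_lt_ord_pred b_lt x_arc; have [-> | xa] := eqVneq x a.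
  by rewrite cdist_ord_pred_self; lia.
by rewrite cdist_ord_pred //; lia.
Qed.

Lemma arc_inter a b x : x \in arc a b -> x \in arc b a -> (x == a) || (x == b).
Proof.
rewrite !inE /cdist; case: a b x => a ? [b ?] [x ?]; rewrite -!val_eqE /=.
by do 4 case: ifP; lia.
Qed.

End Cycle.

Section Wheel.
Variable n : nat.
Hypothesis n_gt2 : (2 < n)%N.
Implicit Types (a b u v w x y : 'I_n) (F S : {set 'I_n}) (c d : 'I_n -> int) (p : 'I_n -> nat).
Local Notation W := (wheel n).

Lemma ordS_neq x : ordS x != x.
Proof. by rewrite -val_eqE val_ordS; case: x => x ? /=; case: ifP; lia. Qed.

Lemma ord_pred_neq x : ord_pred x != x.
Proof. by rewrite -val_eqE val_ord_pred; case: x => x ? /=; case: ifP; lia. Qed.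

Lemma ordS_neq_ord_pred x : ordS x != ord_pred x.
Proof.
by rewrite -val_eqE val_ordS val_ord_pred; case: x => x ? /=; do 2 case: ifP; lia.
Qed.

Lemma wheel_adj v w : W (Some v) (Some w) = ((w == ordS v) + (w == ord_pred v))%N.
Proof.
rewrite /wheel.
have -> : (val w == (v.+1 %% n)%N) = (w == ordS v) by [].
have -> : (val v == (w.+1 %% n)%N) = (w == ord_pred v).
  by rewrite -(can2_eq (@ordSK n) (@ord_predK n)) eq_sym.
have [-> | wS] := eqVneq w (ordS v); first by rewrite eq_sym ordS_neq (negbTE (ordS_neq_ord_pred v)).
have [-> | wP] := eqVneq w (ord_pred v); last by rewrite andbF.
by rewrite eq_sym ord_pred_neq orbT.
Qed.

Lemma degA_wheel F v : degA W F v = ((ordS v \in F) + (ord_pred v \in F))%N%:Z.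
Proof.
rewrite /degA; congr (_%:Z); under eq_bigr do rewrite wheel_adj.
by rewrite big_split /= !sum_eq_indicator.
Qed.

Lemma deg_wheel v : deg W v = 3.
Proof.
have := degA_wheel setT v; rewrite /deg /degA sum_option !inE => -[sumT].
by rewrite (eq_bigl (mem [set: 'I_n])) ?sumT // => w; exact/esym/in_setT.
Qed.

Lemma mults_wheel v : mults W v = 1.
Proof. by []. Qed.

Lemma degA_wheel_le2 F v : degA W F v <= 2.
Proof. by rewrite degA_wheel; do 2 case: (_ \in F). Qed.

Lemma degA_wheel_setT v : degA W setT v = 2.
Proof. by rewrite degA_wheel !inE. Qed.

Lemma degA_wheel_set1 v : degA W [set v] v = 0.
Proof. by rewrite degA_wheel !inE (negbTE (ordS_neq v)) (negbTE (ord_pred_neq v)). Qed.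

Lemma degA_wheel_setC F v : degA W (~: F) v = 2 - degA W F v.
Proof. by rewrite !degA_wheel !inE; do 2 case: (_ \in F). Qed.

Lemma exists_boundary F :
  F != set0 -> F != setT -> exists2 x, x \in F & degA W F x <= 1.
Proof.
move=> F0 FT; have [x xF Sx] := exists_ordS_notin F0 FT.
by exists x; rewrite // degA_wheel (negbTE Sx); case: (_ \in F).
Qed.

(* Each run of [F] has a last vertex and a first vertex; both lie on the boundary. *)
Lemma isolated_of_unique_boundary F :
  F != set0 -> F != setT ->
  {in F &, forall x y, degA W F x <= 1 -> degA W F y <= 1 -> x = y} ->
  exists2 x, x \in F & degA W F x = 0.
Proof.
move=> F0 FT uniq_bd; have [x xF Sx] := exists_ordS_notin F0 FT.
have [y yF Py] := exists_ord_pred_notin F0 FT.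
have eq_xy : x = y.
  by apply: uniq_bd; rewrite // degA_wheel ?(negbTE Sx) ?(negbTE Py); case: (_ \in F).
by exists x; rewrite // degA_wheel (negbTE Sx) eq_xy (negbTE Py).
Qed.

Lemma degA_arc a b x : a != b -> b != ord_pred a -> x \in arc a b ->
  degA W (arc a b) x = ((x != b) + (x != a))%N%:Z.
Proof. by move=> ab b_pred x_arc; rewrite degA_wheel arc_ordS ?arc_ord_pred. Qed.

Lemma setT_neq0 : [set: 'I_n] != set0.
Proof. by rewrite -card_gt0 cardsT card_ord; lia. Qed.

Lemma exists_notin_card_le1 S : (#|S| <= 1)%N -> exists v, v \notin S.
Proof.
move=> S_le1; have : S != setT.
  by apply: contraTneq S_le1 => ->; rewrite cardsT card_ord; lia.
by rewrite -properT => /properP[_ [v _ vS]]; exists v.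
Qed.

Lemma recurrent_of_one_two c :
  (forall i, c i = 1 \/ c i = 2) -> (exists v, c v = 2) -> recurrent W c.
Proof.
move=> c12 [v cv]; split => [u | [F [F0 Fc]]].
  by rewrite deg_wheel; case: (c12 u) => ->.
have [FT | FT] := eqVneq F setT.
  by move: (Fc v); rewrite FT in_setT degA_wheel_setT cv => /(_ isT).
have [x xF bd] := exists_boundary F0 FT.
by have := Fc x xF; case: (c12 x) => ->; lia.
Qed.

Lemma recurrent_cminus_of_one_two c v :
  (forall i, c i = 1 \/ c i = 2) -> (#|[set i | c i == 1]| <= 1)%N -> c v = 2 ->
  recurrent W (cminus W c v).
Proof.
move=> c12 /card_le1_eqP one1 cv.
have dE u : u != v -> cminus W c v u = c u - 1 by move=> uv; rewrite /cminus (negbTE uv).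
split => [u | [F [F0 Fc]]].
  by rewrite deg_wheel /cminus mults_wheel; case: ifP; case: (c12 u) => ->.
have vF : v \notin F.
  by apply/negP => /Fc; rewrite /cminus eqxx cv; have := degA_wheel_le2 F v; lia.
have FT : F != setT by apply: contraNneq vF => ->; rewrite in_setT.
have dF u : u \in F -> cminus W c v u = c u - 1.
  by move=> uF; apply: dE; apply: contraNneq vF => <-.
have [x xF] : exists2 x, x \in F & degA W F x = 0.
  apply: isolated_of_unique_boundary => // x y xF yF bx b_y.
  have one u : u \in F -> degA W F u <= 1 -> u \in [set i | c i == 1].
    move=> uF bu; have := Fc u uF; rewrite dF // inE.
    by case: (c12 u) => ->; lia.
  by rewrite (one1 _ _ (one x xF bx) (one y yF b_y)).
by have := Fc x xF; rewrite dF // => /[swap] ->; case: (c12 x) => ->.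
Qed.

Lemma strongly_recurrent_of_one_two c :
  (forall i, c i = 1 \/ c i = 2) -> (#|[set i | c i == 1]| <= 1)%N ->
  strongly_recurrent W c.
Proof.
move=> c12 one1; split => [|v].
  apply: recurrent_of_one_two => //.
  have [v] := exists_notin_card_le1 one1; rewrite inE => cv.
  by exists v; case: (c12 v) cv => ->.
rewrite inE deg_wheel mults_wheel => cv.
by apply: recurrent_cminus_of_one_two => //; case: (c12 v) cv => ->.
Qed.

Lemma recurrent_exists_ge2 c : recurrent W c -> exists v, 2 <= c v.
Proof.
move=> [_ noF]; have [/existsP[v] | /existsPn lt2] := boolP [exists v, 2 <= c v].
  by exists v.
case: noF; exists setT; split; first exact: setT_neq0.
by move=> v _; rewrite degA_wheel_setT; have := lt2 v; lia.
Qed.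

Lemma recurrent_ge0 c v : recurrent W c -> 0 <= c v.
Proof.
move=> [_ noF]; rewrite leNgt; apply/negP => cv; apply: noF.
exists [set v]; split; first by apply/set0Pn; exists v; rewrite inE.
by move=> u; rewrite inE => /eqP ->; rewrite degA_wheel_set1.
Qed.

Lemma not_recurrent_arc d a b :
  a != b -> b != ord_pred a -> d a = 0 -> d b = 0 ->
  {in arc a b, forall x, d x <= 1} -> ~ recurrent W d.
Proof.
move=> ab b_pred da db d_le1 [_]; apply; exists (arc a b); split.
  by apply/set0Pn; exists a; exact: arc_first.
move=> x x_arc; rewrite degA_arc //.
have [-> | xa] := eqVneq x a; first by rewrite da ab.
have [-> | xb] := eqVneq x b; first by rewrite db.
by have := d_le1 x x_arc; lia.
Qed.

Lemma one_two_of_strongly_recurrent c :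
  strongly_recurrent W c ->
  (forall i, c i = 1 \/ c i = 2) /\ (#|[set i | c i == 1]| <= 1)%N.
Proof.
move=> [c_rec c_VM].
have c_le2 u : c u <= 2 by have := c_rec.1 u; rewrite deg_wheel; lia.
have [v cv] := recurrent_exists_ge2 c_rec.
have d_rec : recurrent W (cminus W c v).
  by apply: c_VM; rewrite inE deg_wheel mults_wheel; lia.
have dE u : u != v -> cminus W c v u = c u - 1 by move=> uv; rewrite /cminus (negbTE uv).
have c_ge1 u : 1 <= c u.
  have [-> | uv] := eqVneq u v; first by lia.
  by have := recurrent_ge0 u d_rec; rewrite dE //; lia.
split=> [i | ]; first by have := c_le2 i; have := c_ge1 i; lia.
have arc_ones x y : x != y -> c x = 1 -> c y = 1 -> v \in arc x y.
  move=> xy cx cy; apply/negPn/negP => vN.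
  have avoid z : z \in arc x y -> z != v by move=> z_arc; apply: contraNneq vN => <-.
  apply: (not_recurrent_arc xy _ _ _ _ d_rec).
  - by apply: contraNneq vN => ->; exact: arc_ord_pred_full.
  - by rewrite dE ?cx ?avoid ?arc_first.
  - by rewrite dE ?cy ?avoid ?arc_last.
  - by move=> z z_arc; rewrite dE ?avoid //; have := c_le2 z; lia.
apply/card_le1_eqP => x y; rewrite !inE => /eqP cx /eqP cy.
apply/eqP/negPn/negP => yx; have xy : x != y by rewrite eq_sym.
case/orP: (arc_inter (arc_ones x y xy cx cy) (arc_ones y x yx cy cx)) => /eqP vE.
  by move: cv; rewrite vE cx.
by move: cv; rewrite vE cy.
Qed.

Lemma strongly_recurrent_wheelP c :
  strongly_recurrent W c <->
  (forall i, c i = 1 \/ c i = 2) /\ (#|[set i | c i == 1]| <= 1)%N.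
Proof.
split; first exact: one_two_of_strongly_recurrent.
by case; exact: strongly_recurrent_of_one_two.
Qed.

Lemma parking_of_one_two p :
  (forall i, p i = 2 \/ p i = 1)%N -> (exists v, p v = 1%N) -> parking W p.
Proof.
move=> p12 [v pv]; split => [u _ | S _ S0]; first by case: (p12 u) => ->.
rewrite setTD; have [-> | ST] := eqVneq S setT.
  by exists v; rewrite ?in_setT // pv setCT degA_wheel !inE.
have [x xS bd] := exists_boundary S0 ST.
by exists x; rewrite // degA_wheel_setC mults_wheel; case: (p12 x) => ->; lia.
Qed.

Lemma not_decomposable_one_two p A :
  (forall i, p i = 2 \/ p i = 1)%N -> (#|[set i | p i == 2%N]| <= 1)%N ->
  A != set0 -> ~: A != set0 -> ~ decomposable W A p.
Proof.
move=> p12 /card_le1_eqP one2 A0 CA0 [_ [q_ge1 _]].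
have CAT : ~: A != setT by rewrite -setC0 (inj_eq (@setC_inj _)).
have q_ge1' x : x \in ~: A -> 1 <= (p x)%:Z - 2 + degA W (~: A) x.
  by move=> xA; have := q_ge1 x xA; rewrite -{1}(setCK A) degA_wheel_setC; lia.
have [x xA] : exists2 x, x \in ~: A & degA W (~: A) x = 0.
  apply: isolated_of_unique_boundary => // x y xA yA bx b_y.
  have two u : u \in ~: A -> degA W (~: A) u <= 1 -> u \in [set i | p i == 2%N].
    move=> uA bu; have := q_ge1' u uA; rewrite inE.
    by case: (p12 u) => -> //; lia.
  by rewrite (one2 _ _ (two x xA bx) (two y yA b_y)).
by have := q_ge1' x xA => /[swap] ->; case: (p12 x) => ->.
Qed.

Lemma prime_parking_of_one_two p :
  (forall i, p i = 2 \/ p i = 1)%N -> (#|[set i | p i == 2%N]| <= 1)%N ->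
  prime_parking W p.
Proof.
move=> p12 one2; split => [| A A0 CA0]; last exact: not_decomposable_one_two.
apply: parking_of_one_two => //.
have [v] := exists_notin_card_le1 one2; rewrite inE => pv.
by exists v; case: (p12 v) pv => ->.
Qed.

Lemma parking_le3 p v : parking W p -> (p v <= 3)%N.
Proof.
move=> [_ pS]; have [u] := pS [set v] (subsetT _) (set1_neq0 v).
by rewrite inE => /eqP ->; rewrite mults_wheel degA_wheel; do 2 case: (_ \in _); lia.
Qed.

Lemma decomposable_of_eq3 p v : parking W p -> p v = 3%N -> decomposable W (~: [set v]) p.
Proof.
move=> [p_ge1 pS] pv.
have degv : degA W (~: [set v]) v = 2.
  by rewrite degA_wheel !inE ordS_neq ord_pred_neq.
split; last first.
  rewrite setCK; split => [w | S Sv S0]; first by rewrite inE => /eqP ->; rewrite pv degv.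
  have vS : v \in S.
    by case/set0Pn: S0 => w wS; have := subsetP Sv w wS; rewrite inE => /eqP <-.
  by exists v; rewrite // pv degv mults_wheel degA_wheel.
split => [w _ | S SA S0]; first exact: p_ge1 (in_setT w).
have vS : v \notin S by apply/negP => /(subsetP SA); rewrite !inE eqxx.
have [nbr | no_nbr] := boolP ((ordS v \in S) || (ord_pred v \in S)).
  have [u] := pS (v |: S) (subsetT _) (setU1_neq0 v S).
  have -> : [set: 'I_n] :\: (v |: S) = ~: [set v] :\: S.
    by apply/setP => x; rewrite !inE andbT negb_or andbC.
  rewrite in_setU1 => /orP[/eqP -> | uS] bound; last by exists u.
  move: bound nbr; rewrite pv mults_wheel degA_wheel !inE ordS_neq.
  by rewrite ord_pred_neq; do 2 case: (_ \in S); lia.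
have [u uS bound] := pS S (subsetT _) S0; exists u => //.
have Su : ordS u != v by apply: contraNneq no_nbr => <-; rewrite ordSK uS orbT.
have Pu : ord_pred u != v by apply: contraNneq no_nbr => <-; rewrite ord_predK uS.
by move: bound; rewrite !degA_wheel !inE Su Pu.
Qed.

Lemma decomposable_arc p a b :
  (forall i, p i = 2 \/ p i = 1)%N -> a != b -> b != ord_pred a ->
  p a = 2%N -> p b = 2%N -> {in ~: arc a b, forall x, p x = 1%N} ->
  decomposable W (~: arc a b) p.
Proof.
move=> p12 ab b_pred pa pb out1.
have degB x : x \in arc a b -> degA W (~: arc a b) x = ((x == b) + (x == a))%N%:Z.
  by move=> x_arc; rewrite degA_wheel_setC degA_arc //; do 2 case: eqP.
split.
  split => [x _ | S SA S0]; first by case: (p12 x) => ->.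
  case/set0Pn: S0 => u uS; exists u => //.
  by rewrite out1 ?(subsetP SA) // mults_wheel degA_wheel; lia.
rewrite setCK; split => [x x_arc | S SB S0].
  rewrite degB //; have [-> | xa] := eqVneq x a; first by rewrite pa (negbTE ab).
  by have [-> | xb] := eqVneq x b; [rewrite pb | case: (p12 x) => ->].
have [aS | aNS] := boolP (a \in S).
  by exists a; rewrite // degB ?(subsetP SB) // pa eqxx mults_wheel degA_wheel; lia.
have [bS | bNS] := boolP (b \in S).
  by exists b; rewrite // degB ?(subsetP SB) // pb eqxx mults_wheel degA_wheel; lia.
have ST : S != setT by apply: contraNneq aNS => ->; rewrite in_setT.
have [u uS Su] := exists_ordS_notin S0 ST.
have u_arc := subsetP SB u uS.
have ua : u != a by apply: contraNneq aNS => <-.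
have ub : u != b by apply: contraNneq bNS => <-.
exists u; rewrite // degB // (negbTE ua) (negbTE ub) mults_wheel degA_wheel in_setD Su.
by rewrite arc_ordS // ub; case: (p12 u) => ->; case: (_ \in _).
Qed.

Lemma parking_exists_one p : parking W p -> exists z, p z = 1%N.
Proof.
move=> [p_ge1 pS]; have [z _] := pS setT (subsetT _) setT_neq0.
rewrite setDv degA_wheel !inE mults_wheel => pz.
by exists z; have := p_ge1 z (in_setT z); lia.
Qed.

Lemma prime_parking_one_two p : prime_parking W p -> (forall i, p i = 2 \/ p i = 1)%N.
Proof.
move=> [park p_prime] i; have p_ne3 : p i != 3%N.
  apply/eqP => pi; apply: (p_prime (~: [set i])); last exact: decomposable_of_eq3.
    by apply/set0Pn; exists (ordS i); rewrite !inE ordS_neq.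
  by rewrite setCK set1_neq0.
by have := park.1 i (in_setT i); have := parking_le3 i park; lia.
Qed.

(* The arc runs from a 2 preceded by a 1 to the last 2 after it; all else is 1. *)
Lemma decomposable_of_two_twos p :
  (forall i, p i = 2 \/ p i = 1)%N -> (exists z, p z = 1%N) ->
  (1 < #|[set i | p i == 2%N]|)%N ->
  exists A, [/\ A != set0, ~: A != set0 & decomposable W A p].
Proof.
move=> p12 [z pz] two2; pose T2 := [set i | p i == 2%N].
have T2P i : (i \in T2) = (p i == 2%N) by rewrite inE.
have T2_0 : T2 != set0 by rewrite -card_gt0; exact: ltnW.
have T2_T : T2 != setT.
  by apply/negP => /eqP T2E; have := in_setT z; rewrite -T2E T2P pz.
have [a] := exists_ord_pred_notin T2_0 T2_T; rewrite !T2P => /eqP pa pPa.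
have a2 : a \in T2 by rewrite T2P pa.
have [b b2 b_max] := @arg_maxnP _ a (mem T2) (cdist a) a2.
have pb : p b = 2%N by apply/eqP; rewrite -T2P.
have b_pred : b != ord_pred a by apply: contraNneq pPa => <-; rewrite pb.
have ab : a != b.
  case/card_gt1P: two2 => x [y [x2 y2 xy]].
  have [w w2 wa] : exists2 w, w \in T2 & w != a.
    by have [xa | ] := eqVneq x a; [exists y; rewrite // -xa eq_sym | exists x].
  apply: contraNneq wa => ab.
  have : (cdist a w <= cdist a b)%N := b_max w w2.
  by rewrite -ab cdist_self leqn0 cdist_eq0.
exists (~: arc a b); split.
- by apply/set0Pn; exists (ord_pred a); rewrite in_setC arc_ord_pred ?arc_first ?eqxx.
- by rewrite setCK; apply/set0Pn; exists a; exact: arc_first.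
apply: decomposable_arc => // x; rewrite in_setC inE -ltnNge => x_out.
case: (p12 x) => // px.
have : x \in T2 -> (cdist a x <= cdist a b)%N := b_max x.
by rewrite T2P px eqxx => /(_ isT); lia.
Qed.

Lemma one_two_of_prime_parking p :
  prime_parking W p ->
  (forall i, p i = 2 \/ p i = 1)%N /\ (#|[set i | p i == 2%N]| <= 1)%N.
Proof.
move=> pp; have p12 := prime_parking_one_two pp.
split => //; rewrite leqNgt; apply/negP => two2.
have [A [A0 CA0 decA]] := decomposable_of_two_twos p12 (parking_exists_one pp.1) two2.
exact: pp.2 A A0 CA0 decA.
Qed.

Lemma prime_parking_wheelP p :
  prime_parking W p <->
  (forall i, p i = 2 \/ p i = 1)%N /\ (#|[set i | p i == 2%N]| <= 1)%N.
Proof.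
split; first exact: one_two_of_prime_parking.
by case; exact: prime_parking_of_one_two.
Qed.

End Wheel.

Lemma enum_ffun_at_most_one (N : nat) (V : eqType) (e d : V) : e != d ->
  exists s : seq {ffun 'I_N -> V},
    [/\ uniq s, size s = N.+1 &
      forall f, f \in s <-> (forall i, f i = e \/ f i = d) /\ (#|[set i | f i == e]| <= 1)%N].
Proof.
move=> ed; pose g i : {ffun 'I_N -> V} := [ffun j => if j == i then e else d].
have g_inj : injective g.
  move=> i j /ffunP/(_ i); rewrite !ffunE eqxx.
  by case: eqP => // _ /eqP; rewrite (negbTE ed).
exists ([ffun=> d] :: map g (enum 'I_N)); split.
- rewrite cons_uniq map_inj_uniq ?enum_uniq // andbT.
  apply/mapP => -[i _ /ffunP/(_ i)]; rewrite !ffunE eqxx => /eqP.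
  by rewrite eq_sym (negbTE ed).
- by rewrite /= size_map size_enum_ord.
move=> f; split.
  rewrite inE => /orP[/eqP -> | /mapP[i _ ->]].
    split=> [i | ]; first by rewrite ffunE; right.
    rewrite (_ : [set i | _] = set0) ?cards0 //.
    by apply/setP => i; rewrite !inE ffunE eq_sym (negbTE ed).
  split=> [j | ]; first by rewrite ffunE; case: eqP; [left | right].
  rewrite (_ : [set j | _] = [set i]) ?cards1 //.
  by apply/setP => j; rewrite !inE ffunE; case: (j == i); rewrite ?eqxx // eq_sym (negbTE ed).
move=> [f_ed /card_le1_eqP f_e]; rewrite inE.
have [/existsP[i fi] | /existsPn f_d] := boolP [exists i, f i == e].
  apply/orP; right; apply/mapP; exists i; rewrite ?mem_enum //.
  apply/ffunP => j; rewrite ffunE; have [-> | ji] := eqVneq j i; first exact/eqP.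
  case: (f_ed j) => // fj; case/eqP: ji; apply: f_e; rewrite inE ?fj ?fi //.
apply/orP; left; apply/eqP/ffunP => i; rewrite ffunE.
by case: (f_ed i) => // fi; have := f_d i; rewrite fi eqxx.
Qed.

Theorem proposition3p3 (n : nat) (hn : (3 <= n)%N) :
  (forall c : {ffun 'I_n -> int},
     strongly_recurrent (wheel n) c <->
     ((forall i, c i = 1 \/ c i = 2) /\ (#|[set i | c i == 1]| <= 1)%N)) /\
  (exists s : seq {ffun 'I_n -> int},
     [/\ uniq s, size s = n.+1 &
         forall c, c \in s <-> strongly_recurrent (wheel n) c]) /\
  (exists s : seq {ffun 'I_n -> nat},
     [/\ uniq s, size s = n.+1 &
         forall p, p \in s <-> prime_parking (wheel n) p]).
Proof.
have SRP := strongly_recurrent_wheelP hn; have PPP := prime_parking_wheelP hn.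
split; first by move=> c; exact: SRP.
split.
  have [s [s_uniq s_size s_mem]] := @enum_ffun_at_most_one n int 1 2 isT.
  by exists s; split => // c; rewrite s_mem SRP.
have [s [s_uniq s_size s_mem]] := @enum_ffun_at_most_one n nat 2 1 isT.
by exists s; split => // p; rewrite s_mem PPP.
Qed.
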